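(* Let $d\ge1$ and let $P(k)$, $k\ge d+1$, be the asymptotic degree distribution of the $d$-dimensional P-RAN, given by $P(d+1)=\frac12$ and $P(k)=\frac{dk-d^2-d+1}{dk-d^2+d+2}P(k-1)$ for $k>d+1$. Then the P-RAN is scale free with degree exponent $\gamma=\frac{2d+1}{d}$, in the sense that $$\lim_{k\to\infty}\frac{\log P(k)-\log P(k-1)}{\log k-\log(k-1)}=-\frac{2d+1}{d},$$ so that $P(k)\sim k^{-\gamma}$ for large $k$.
   Context: P-RAN process in dimension $d$: start from a complete graph on $d+2$ vertices with the list of its $d+2$ $(d+1)$-cliques; at each step a clique is chosen uniformly at random from the list, a new vertex is joined to its $d+1$ vertices, the chosen clique stays in the list and the $d+1$ new $(d+1)$-cliques containing the new vertex are appended. $P(k)$ is the limit as $t\to\infty$ of the expected fraction of vertices having degree $k$. *)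

From Stdlib Require Import Reals.
From Coquelicot Require Import Coquelicot.
Open Scope R_scope.

Fixpoint PRAN_P_shift (d : nat) (j : nat) : R :=
  match j with
  | O => / 2
  | S j' =>
      let k := INR (d + 1 + S j') in
      let dr := INR d in
      (dr * k - dr ^ 2 - dr + 1) / (dr * k - dr ^ 2 + dr + 2)
        * PRAN_P_shift d j'
  end.

(* P(k) for k >= d+1 (value 0 outside the domain k >= d+1, never used
   in the asymptotic statement). *)
Definition PRAN_P (d k : nat) : R :=
  if (d + 1 <=? k)%nat then PRAN_P_shift d (k - (d + 1)) else 0.

From Stdlib Require Import Reals Lra Lia Psatz.
From Coquelicot Require Import Coquelicot.
Open Scope R_scope.

(* For k >= d+2 the recursion gives P(k)/P(k-1) = a/(a + 2d + 1) with
   a = dk - d^2 - d + 1, so the numerator of the log-slope is -ln(1 + (2d+1)/a)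
   and its denominator is ln(1 + 1/(k-1)).  The bounds x/(1+x) <= ln(1+x) <= x
   squeeze the log-slope between two ratios of affine functions of k, both of
   which tend to -(2d+1)/d. *)

Lemma ln_1p_bounds x : 0 < x -> x / (1 + x) <= ln (1 + x) <= x.
Proof.
  intros Hx; split.
  - assert (Hexp := exp_ineq1_le (- (x / (1 + x)))).
    replace (1 + - (x / (1 + x))) with (/ (1 + x)) in Hexp by (field; lra).
    apply ln_le in Hexp; [|apply Rinv_0_lt_compat; lra].
    rewrite ln_exp, ln_Rinv in Hexp by lra; lra.
  - assert (Hexp := exp_ineq1_le x).
    apply ln_le in Hexp; [|lra].
    rewrite ln_exp in Hexp; lra.
Qed.

Lemma ln_ratio_slope_bounds (a c x : R) : 0 < a -> 0 < c -> 1 < x ->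
  - (c * x / a) <= ln (a / (a + c)) / (ln x - ln (x - 1))
  <= - (c * (x - 1) / (a + c)).
Proof.
  intros Ha Hc Hx.
  assert (Hnum : ln (a / (a + c)) = - ln (1 + c / a)).
  { assert (0 < c / a) by (apply Rdiv_lt_0_compat; lra).
    rewrite <- ln_Rinv by lra; f_equal; field; lra. }
  assert (Hden : ln x - ln (x - 1) = ln (1 + / (x - 1))).
  { rewrite <- ln_div by lra; f_equal; field; lra. }
  destruct (ln_1p_bounds (c / a)) as [Lge Lle]; [apply Rdiv_lt_0_compat; lra|].
  destruct (ln_1p_bounds (/ (x - 1))) as [Mge Mle]; [apply Rinv_0_lt_compat; lra|].
  rewrite Hnum, Hden.
  set (L := ln (1 + c / a)) in *; set (M := ln (1 + / (x - 1))) in *.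
  replace (c / a / (1 + c / a)) with (c / (a + c)) in Lge by (field; lra).
  replace (/ (x - 1) / (1 + / (x - 1))) with (/ x) in Mge by (field; lra).
  assert (HM : 0 < M).
  { apply Rlt_le_trans with (/ x); [apply Rinv_0_lt_compat; lra | exact Mge]. }
  set (q := L / M).
  assert (HL : L = q * M) by (unfold q; field; lra).
  replace (- L / M) with (- q) by (unfold q, Rdiv; ring).
  rewrite HL in Lge, Lle.
  assert (Hq : 0 < q).
  { apply Rmult_lt_reg_r with M; [exact HM|].
    rewrite Rmult_0_l; apply Rlt_le_trans with (c / (a + c)); [|exact Lge].
    apply Rdiv_lt_0_compat; lra. }
  split.
  - assert (q <= c * x / a); [|lra].
    apply Rmult_le_reg_r with (/ x); [apply Rinv_0_lt_compat; lra|].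
    replace (c * x / a * / x) with (c / a) by (field; lra).
    apply Rle_trans with (q * M); [apply Rmult_le_compat_l; lra | exact Lle].
  - assert (c * (x - 1) / (a + c) <= q); [|lra].
    apply Rmult_le_reg_r with (/ (x - 1)); [apply Rinv_0_lt_compat; lra|].
    replace (c * (x - 1) / (a + c) * / (x - 1)) with (c / (a + c)) by (field; lra).
    apply Rle_trans with (q * M); [exact Lge | apply Rmult_le_compat_l; lra].
Qed.

Lemma is_lim_seq_affine_ratio (a b c e : R) : 0 < c ->
  is_lim_seq (fun k => (a * INR k + b) / (c * INR k + e)) (a / c).
Proof.
  intros Hc.
  assert (Hden : is_lim_seq (fun k => c * INR k + e) p_infty).
  { apply is_lim_seq_plus with p_infty e; [| apply is_lim_seq_const | reflexivity].
    apply is_lim_seq_ext with (fun k => INR k * c); [intro; ring|].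
    apply is_lim_seq_mult with p_infty c;
      [apply is_lim_seq_INR | apply is_lim_seq_const |].
    apply is_Rbar_mult_p_infty_pos; simpl; lra. }
  assert (Hinv : is_lim_seq (fun k => / (c * INR k + e)) 0)
    by exact (is_lim_seq_inv _ _ Hden ltac:(discriminate)).
  apply is_lim_seq_ext_loc with (fun k => a / c + (b - a * e / c) * / (c * INR k + e)).
  - destruct (proj2 (is_lim_seq_spec _ _) Hden 0) as [N HN].
    exists N; intros k Hk; specialize (HN k Hk); field; lra.
  - assert (Hlim := is_lim_seq_plus' _ _ _ _ (is_lim_seq_const (a / c))
                      (is_lim_seq_mult' _ _ _ _ (is_lim_seq_const (b - a * e / c)) Hinv)).
    rewrite Rmult_0_r, Rplus_0_r in Hlim; exact Hlim.
Qed.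

Lemma PRAN_P_shift_pos d j : (1 <= d)%nat -> 0 < PRAN_P_shift d j.
Proof.
  intros hd; induction j as [|j IH]; simpl PRAN_P_shift; [lra|].
  assert (HD : 1 <= INR d) by (apply (le_INR 1); exact hd).
  assert (HK : INR d + 2 <= INR (d + 1 + S j)).
  { replace (INR d + 2) with (INR (d + 2)) by (rewrite plus_INR; reflexivity).
    apply le_INR; lia. }
  apply Rmult_lt_0_compat; [apply Rdiv_lt_0_compat; nra | exact IH].
Qed.

Lemma PRAN_P_pos d k : (1 <= d)%nat -> (d + 1 <= k)%nat -> 0 < PRAN_P d k.
Proof.
  intros hd hk; unfold PRAN_P.
  rewrite (proj2 (Nat.leb_le _ _) hk); exact (PRAN_P_shift_pos d _ hd).
Qed.

Lemma PRAN_P_succ d k : (d + 2 <= k)%nat ->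
  PRAN_P d k =
  (INR d * INR k - INR d ^ 2 - INR d + 1) / (INR d * INR k - INR d ^ 2 + INR d + 2)
  * PRAN_P d (k - 1).
Proof.
  intros hk; unfold PRAN_P.
  rewrite (proj2 (Nat.leb_le (d + 1) k)), (proj2 (Nat.leb_le (d + 1) (k - 1))) by lia.
  replace (k - (d + 1))%nat with (S (k - 1 - (d + 1))) by lia.
  simpl PRAN_P_shift.
  replace (d + 1 + S (k - 1 - (d + 1)))%nat with k by lia.
  reflexivity.
Qed.

Definition log_slope (f : nat -> R) (k : nat) : R :=
  (ln (f k) - ln (f (k - 1)%nat)) / (ln (INR k) - ln (INR (k - 1))).

Lemma PRAN_log_slope_bounds d k : (1 <= d)%nat -> (d + 2 <= k)%nat ->
  (- (2 * INR d + 1) * INR k + 0) / (INR d * INR k + (1 - INR d ^ 2 - INR d))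
  <= log_slope (PRAN_P d) k <=
  (- (2 * INR d + 1) * INR k + (2 * INR d + 1)) / (INR d * INR k + (2 + INR d - INR d ^ 2)).
Proof.
  intros hd hk.
  assert (HD : 1 <= INR d) by (apply (le_INR 1); exact hd).
  assert (HK : INR d + 2 <= INR k).
  { replace (INR d + 2) with (INR (d + 2)) by (rewrite plus_INR; reflexivity).
    apply le_INR; exact hk. }
  set (D := INR d) in *; set (K := INR k) in *.
  unfold log_slope; rewrite PRAN_P_succ by exact hk.
  rewrite minus_INR by lia; change (INR 1) with 1; fold D K.
  set (a := D * K - D ^ 2 - D + 1).
  assert (Ha : 0 < a) by (unfold a; nra).
  replace (D * K - D ^ 2 + D + 2) with (a + (2 * D + 1)) by (unfold a; ring).
  assert (Hr : 0 < a / (a + (2 * D + 1))) by (apply Rdiv_lt_0_compat; lra).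
  assert (HP : 0 < PRAN_P d (k - 1)) by (apply PRAN_P_pos; lia).
  rewrite ln_mult by assumption.
  replace (ln (a / (a + (2 * D + 1))) + ln (PRAN_P d (k - 1)) - ln (PRAN_P d (k - 1)))
    with (ln (a / (a + (2 * D + 1)))) by ring.
  replace (D * K + (1 - D ^ 2 - D)) with a by (unfold a; ring).
  replace (D * K + (2 + D - D ^ 2)) with (a + (2 * D + 1)) by (unfold a; ring).
  destruct (ln_ratio_slope_bounds a (2 * D + 1) K) as [Hlo Hhi]; [lra | lra | lra |].
  split.
  - replace ((- (2 * D + 1) * K + 0) / a) with (- ((2 * D + 1) * K / a)) by (field; lra).
    exact Hlo.
  - replace ((- (2 * D + 1) * K + (2 * D + 1)) / (a + (2 * D + 1)))
      with (- ((2 * D + 1) * (K - 1) / (a + (2 * D + 1)))) by (field; lra).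
    exact Hhi.
Qed.

Theorem mainTheorem4 (d : nat) (hd : (1 <= d)%nat) :
  is_lim_seq
    (fun k : nat =>
       (ln (PRAN_P d k) - ln (PRAN_P d (k - 1))) / (ln (INR k) - ln (INR (k - 1))))
    (Finite (- (2 * INR d + 1) / INR d)).
Proof.
  change (is_lim_seq (log_slope (PRAN_P d)) (- (2 * INR d + 1) / INR d)).
  assert (HD : 0 < INR d) by (apply lt_0_INR; lia).
  apply is_lim_seq_le_le_loc with
    (u := fun k => (- (2 * INR d + 1) * INR k + 0) / (INR d * INR k + (1 - INR d ^ 2 - INR d)))
    (w := fun k => (- (2 * INR d + 1) * INR k + (2 * INR d + 1))
                   / (INR d * INR k + (2 + INR d - INR d ^ 2))).
  - exists (d + 2)%nat; intros k hk; exact (PRAN_log_slope_bounds d k hd hk).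
  - exact (is_lim_seq_affine_ratio _ _ _ _ HD).
  - exact (is_lim_seq_affine_ratio _ _ _ _ HD).
Qed.
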